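(* Let $\mathcal H=\mathbb C^2$ with orthonormal basis $e_1,e_2$. For a selfadjoint unitary $\eta$ on $\mathcal H$ let $\mathcal B(\eta)$ be the unital algebra of operators on the Fermi–Fock space $\mathcal F_-(\mathbb C^2)$ generated by $a_-(e_i)$ and $a_-^\dagger(e_i):=\Gamma(\eta)a_-^*(e_i)\Gamma(\eta)$, $i=1,2$, with involution $x\mapsto x^\dagger:=\Gamma(\eta)x^*\Gamma(\eta)$ ($x^*$ the Hilbert-space adjoint). Then the involutive algebras $(\mathcal B(I),\dagger)$ and $(\mathcal B(-I),\dagger)$ are not involutively isomorphic.
   Context: An involutive algebra is a complex algebra with a conjugate-linear antimultiplicative map $\varphi$ with $\varphi^2=\mathrm{id}$; an involutive isomorphism is an algebra isomorphism $F$ with $F(\varphi(x))=\psi(F(x))$. $\mathcal F_-(\mathbb C^2)$ is the antisymmetric Fock space over $\mathbb C^2$ (dimension 4), $a_-(f),a_-^*(f)$ are the usual Fermi annihilation/creation operators satisfying $a_-(f)a_-^*(g)+a_-^*(g)a_-(f)=\langle f|g\rangle I$, and $\Gamma(\eta)=I\oplus\eta\oplus\eta^{\otimes2}\oplus\cdots$ restricted to $\mathcal F_-$. For $\eta=-I$ the generators satisfy $a_-(f)a_-^\dagger(g)+a_-^\dagger(g)a_-(f)=-\langle f|g\rangle I$. *)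

From HB Require Import structures.
From mathcomp Require Import all_boot all_order all_algebra.
From mathcomp Require Import complex.
From mathcomp Require Import reals.
Set Implicit Arguments. Unset Strict Implicit. Unset Printing Implicit Defensive.
Import Order.TTheory GRing.Theory Num.Theory.
Local Open Scope ring_scope.

(* One-particle space H = C^2 with orthonormal basis e_0, e_1 (indices 'I_2).
   Antisymmetric Fock space F_-(C^2): orthonormal basis e_S, S a subset of
   'I_2, where e_S = e_{s_1} /\ ... /\ e_{s_k} with s_1 < ... < s_k
   (e_emptyset = vacuum).  It has dimension #|{set 'I_2}| = 4.  Operators on
   F_-(C^2) are square matrices in that basis; the basis vector with index
   p : 'I_fdim is e_(fS p). *)
Definition fdim : nat := #|{set 'I_2}|.
Definition fS (p : 'I_fdim) : {set 'I_2} := enum_val p.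

Section Fock.
Variable R : realType.
Local Notation C := (R[i]).

Definition adjmx (n : nat) (A : 'M[C]_n) : 'M[C]_n := \matrix_(i, j) (A j i)^*.

(* Creation operator a_-^*(e_i):
   a^*(e_i) e_S = (-1)^{#{j in S | j < i}} e_{S u {i}} if i notin S, else 0. *)
Definition cre (i : 'I_2) : 'M[C]_fdim :=
  \matrix_(p, q)
    if (i \notin fS q) && (fS p == i |: fS q)
    then (-1) ^+ #|[set j in fS q | (j < i)%N]| else 0.

Definition ann (i : 'I_2) : 'M[C]_fdim := adjmx (cre i).

(* Second quantization Gamma(eta) restricted to F_-(C^2):
   Gamma(eta) e_S = (eta e_{s_1}) /\ ... /\ (eta e_{s_k}), whose coefficient on
   e_T is the minor det(eta_{T,S}) when #|T| = #|S| (and 0 otherwise). *)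
Definition Gamma (eta : 'M[C]_2) : 'M[C]_fdim :=
  \matrix_(p, q)
    if #|fS p| == #|fS q| then
      \det (\matrix_(a < #|fS p|, b < #|fS p|)
               eta (nth ord0 (enum (fS p)) a) (nth ord0 (enum (fS q)) b))
    else 0.

Definition dag (eta : 'M[C]_2) (x : 'M[C]_fdim) : 'M[C]_fdim :=
  Gamma eta *m adjmx x *m Gamma eta.

Definition cre_dag (eta : 'M[C]_2) (i : 'I_2) : 'M[C]_fdim :=
  Gamma eta *m cre i *m Gamma eta.

Inductive inB (eta : 'M[C]_2) : 'M[C]_fdim -> Prop :=
  | inB_one : inB eta 1%:M
  | inB_ann i : inB eta (ann i)
  | inB_cre i : inB eta (cre_dag eta i)
  | inB_add x y : inB eta x -> inB eta y -> inB eta (x + y)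
  | inB_scale (c : C) x : inB eta x -> inB eta (c *: x)
  | inB_mul x y : inB eta x -> inB eta y -> inB eta (x *m y).

Definition invol_iso (eta1 eta2 : 'M[C]_2) (F : 'M[C]_fdim -> 'M[C]_fdim) : Prop :=
  (forall x, inB eta1 x -> inB eta2 (F x)) /\
  (forall x y, inB eta1 x -> inB eta1 y -> F x = F y -> x = y) /\
  (forall y, inB eta2 y -> exists2 x, inB eta1 x & F x = y) /\
  (forall x y, inB eta1 x -> inB eta1 y -> F (x + y) = F x + F y) /\
  (forall (c : C) x, inB eta1 x -> F (c *: x) = c *: F x) /\
  (forall x y, inB eta1 x -> inB eta1 y -> F (x *m y) = F x *m F y) /\
  (forall x, inB eta1 x -> F (dag eta1 x) = dag eta2 (F x)).

End Fock.

From HB Require Import structures.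
From mathcomp Require Import all_boot all_order all_algebra.
From mathcomp Require Import complex.
From mathcomp Require Import reals.
Set Implicit Arguments. Unset Strict Implicit. Unset Printing Implicit Defensive.
Import GRing.Theory Num.Theory.
Local Open Scope ring_scope.

(* For eta = I the involution is the Hilbert space adjoint, which is definite:
   x^* x = 0 forces x = 0.  For eta = -I, Gamma(-I) is the parity operator and
   a^dagger = -a^*, so y := a - a^dagger a (a := a_-(e_1)) is a nonzero element
   of B(-I) with y^dagger y = 0.  An involutive isomorphism would transport
   definiteness from (B(I), dagger) to (B(-I), dagger). *)

Section Adjoint.
Variables (R : realType) (n : nat).
Local Notation M := 'M[R[i]]_n.

Lemma adjmxD (A B : M) : adjmx (A + B) = adjmx A + adjmx B.
Proof. by apply/matrixP => i j; rewrite !mxE rmorphD. Qed.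

Lemma adjmxZ c (A : M) : adjmx (c *: A) = c^* *: adjmx A.
Proof. by apply/matrixP => i j; rewrite !mxE rmorphM. Qed.

Lemma adjmxM (A B : M) : adjmx (A *m B) = adjmx B *m adjmx A.
Proof.
apply/matrixP => i j; rewrite !mxE rmorph_sum; apply: eq_bigr => k _.
by rewrite !mxE rmorphM mulrC.
Qed.

Lemma adjmxK (A : M) : adjmx (adjmx A) = A.
Proof. by apply/matrixP => i j; rewrite !mxE conjCK. Qed.

Lemma adjmx0 : adjmx (0 : M) = 0.
Proof. by apply/matrixP => i j; rewrite !mxE conjC0. Qed.

Lemma adjmx1 : adjmx (1%:M : M) = 1%:M.
Proof. by apply/matrixP => i j; rewrite !mxE eq_sym conjC_nat. Qed.

(* The diagonal entry (j, j) of A^* A is the sum of the |A k j|^2. *)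
Lemma adjmx_mul_eq0 (A : M) : adjmx A *m A = 0 -> A = 0.
Proof.
move=> AA0; apply/matrixP => k j; have := congr1 (fun B : M => B j j) AA0.
rewrite !mxE => sum_eq0.
have norm_eq0 := @psumr_eq0P _ _ predT (fun k => (A k j)^* * A k j) _ _ k isT.
apply/eqP; rewrite -mul_conjC_eq0 mulrC norm_eq0 //.
- by move=> i _; rewrite -normCKC exprn_ge0.
- by rewrite -[RHS]sum_eq0; apply: eq_bigr => i _; rewrite !mxE.
Qed.

End Adjoint.

Section FockSpace.
Variable R : realType.
Local Notation C := R[i].
Local Notation M := 'M[C]_fdim.
Local Notation cre := (cre R).
Local Notation ann := (ann R).

Lemma Gamma_scalar (k : C) :
  Gamma (k%:M : 'M[C]_2) = diag_mx (\row_p k ^+ #|fS p|).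
Proof.
apply/matrixP => p q; rewrite !mxE.
have [<-|npq] := eqVneq p q.
  rewrite eqxx mulr1n.
  rewrite (_ : \matrix_(a, b) _ = (k%:M : 'M_#|fS p|)) ?det_scalar //.
  by apply/matrixP => a b; rewrite !mxE nth_uniq ?enum_uniq // -?cardE.
rewrite mulr0n; case: eqP => // card_pq.
have neq_pq : fS p != fS q by apply: contra npq => /eqP/enum_val_inj ->.
have : ~~ (fS p \subset fS q).
  by apply: contra neq_pq => sub; rewrite eqEcard sub card_pq leqnn.
case/subsetPn => s sp snq.
have s_idx : (index s (enum (fS p)) < #|fS p|)%N by rewrite cardE index_mem mem_enum.
rewrite (expand_det_row _ (Ordinal s_idx)) big1 // => b _.
rewrite !mxE /= nth_index ?mem_enum //.
case: eqP => [s_eq|]; last by rewrite mulr0n mul0r.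
have : nth ord0 (enum (fS q)) b \in fS q.
  by rewrite -mem_enum mem_nth // -cardE -card_pq.
by rewrite -s_eq (negPf snq).
Qed.

Lemma Gamma1 : Gamma (1%:M : 'M[C]_2) = 1%:M.
Proof. by rewrite Gamma_scalar; apply/matrixP => p q; rewrite !mxE expr1n. Qed.

Definition parity : M := diag_mx (\row_p (-1) ^+ #|fS p|).

Lemma GammaN1 : Gamma (- 1%:M : 'M[C]_2) = parity.
Proof.
rewrite (_ : - 1%:M = (-1)%:M) ?Gamma_scalar //.
by apply/matrixP => p q; rewrite !mxE mulNrn.
Qed.

Lemma sign_sqr (k : nat) : (-1) ^+ k * (-1) ^+ k = 1 :> C.
Proof. by rewrite -exprD addnn -mul2n exprM expr2 mulN1r opprK expr1n. Qed.

Lemma parityK : parity *m parity = 1%:M.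
Proof. by rewrite mulmx_diag; apply/matrixP => p q; rewrite !mxE sign_sqr. Qed.

Lemma parity_conj_odd (A : M) :
  (forall p q, A p q != 0 -> #|fS p| = (#|fS q|).+1 \/ #|fS q| = (#|fS p|).+1) ->
  parity *m A *m parity = - A.
Proof.
move=> A_shift; rewrite mul_diag_mx mul_mx_diag; apply/matrixP => p q.
rewrite !mxE.
have [->|nz] := eqVneq (A p q) 0; first by rewrite mulr0 mul0r oppr0.
case: (A_shift p q nz) => ->; rewrite exprS mulN1r.
- by rewrite !mulNr -mulrA [A p q * _]mulrC mulrA sign_sqr mul1r.
- by rewrite mulrN -mulrA [A p q * _]mulrC mulrA sign_sqr mul1r.
Qed.

Lemma creE (i : 'I_2) p q : cre i p q =
  if (i \notin fS q) && (fS p == i |: fS q)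
    then (-1) ^+ #|[set j in fS q | (j < i)%N]| else 0.
Proof. by rewrite mxE. Qed.

Lemma cre_neq0_supp i p q : cre i p q != 0 -> i \notin fS q /\ fS p = i |: fS q.
Proof. by rewrite creE; case: ifP => [/andP[? /eqP ?]|]; rewrite ?eqxx. Qed.

Lemma cre_neq0_card i p q : cre i p q != 0 -> #|fS p| = (#|fS q|).+1.
Proof. by case/cre_neq0_supp => iNq ->; rewrite cardsU1 iNq. Qed.

Lemma parity_cre i : parity *m cre i *m parity = - cre i.
Proof. by apply: parity_conj_odd => p q /cre_neq0_card; left. Qed.

Lemma parity_ann i : parity *m ann i *m parity = - ann i.
Proof.
by apply: parity_conj_odd => p q; rewrite mxE conjC_eq0 => /cre_neq0_card; right.
Qed.

Lemma cre_cre i : cre i *m cre i = 0.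
Proof.
apply/matrixP => p q; rewrite !mxE; apply: big1 => r _.
have [->|/cre_neq0_supp[_ r_eq]] := eqVneq (cre i r q) 0; first by rewrite mulr0.
by rewrite creE r_eq setU11 mul0r.
Qed.

Lemma ann_ann i : ann i *m ann i = 0.
Proof. by rewrite /ann -adjmxM cre_cre adjmx0. Qed.

Lemma cre_ann i : cre i *m ann i = diag_mx (\row_p (i \in fS p)%:R).
Proof.
apply/matrixP => p q; rewrite !mxE.
have term_neq0 r q' : cre i p r * ann i r q' != 0 ->
    [/\ p = q', fS r = fS p :\ i & i \in fS p].
  rewrite [ann i r q']mxE mulf_eq0 negb_or conjC_eq0.
  move=> /andP[/cre_neq0_supp[iNr pr] /cre_neq0_supp[_ q'r]].
  split; first by apply: enum_val_inj; rewrite -/(fS p) -/(fS q') pr q'r.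
    by rewrite pr setU1K.
  by rewrite pr setU11.
have [<-|npq] := eqVneq p q; last first.
  rewrite mulr0n; apply: big1 => r _; apply/eqP.
  by apply: contraNT npq => /term_neq0[-> _]; rewrite eqxx.
rewrite mulr1n; have [ip|iNp] := boolP (i \in fS p); last first.
  by apply: big1 => r _; apply/eqP; apply: contraNT iNp => /term_neq0[].
pose r0 : 'I_fdim := enum_rank (fS p :\ i).
have r0E : fS r0 = fS p :\ i by rewrite /fS enum_rankK.
rewrite (bigD1 r0) //= big1 ?addr0; last first.
  move=> r nr; apply/eqP; apply: contraNT nr => /term_neq0[_ rE _].
  by apply/eqP; apply: enum_val_inj; rewrite -/(fS r) -/(fS r0) rE r0E.
rewrite [ann i r0 p]mxE -normCK creE r0E !inE eqxx /= setD1K //.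
by rewrite eqxx normrX normrN1 !expr1n.
Qed.

Lemma cre_ann_cre i : cre i *m ann i *m cre i = cre i.
Proof.
rewrite cre_ann mul_diag_mx; apply/matrixP => p q; rewrite mxE [X in X * _]mxE.
have [->|/cre_neq0_supp[_ ->]] := eqVneq (cre i p q) 0; first by rewrite mulr0.
by rewrite setU11 mul1r.
Qed.

Lemma ann_cre_ann i : ann i *m cre i *m ann i = ann i.
Proof. by rewrite /ann -{2}(adjmxK (cre i)) -!adjmxM mulmxA cre_ann_cre. Qed.

Lemma cre_neq0 i : cre i != 0.
Proof.
apply/eqP => /(congr1 (fun A : M => A (enum_rank [set i]) (enum_rank set0))).
rewrite creE /fS !enum_rankK inE setU0 eqxx /= mxE.
rewrite (_ : [set j in set0 | _] = set0); last by apply/setP => j; rewrite !inE.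
by rewrite cards0 expr0 => /eqP; rewrite oner_eq0.
Qed.

Lemma ann_neq0 i : ann i != 0.
Proof.
apply: contraNneq (cre_neq0 i) => ann0.
by rewrite -[cre i]adjmxK -/(ann i) ann0 adjmx0.
Qed.

Section Involution.
Variable eta : 'M[C]_2.
Hypothesis GammaK : Gamma eta *m Gamma eta = 1%:M.

Lemma dagD x y : dag eta (x + y) = dag eta x + dag eta y.
Proof. by rewrite /dag adjmxD mulmxDr mulmxDl. Qed.

Lemma dagM x y : dag eta (x *m y) = dag eta y *m dag eta x.
Proof.
by rewrite /dag adjmxM !mulmxA -[_ *m Gamma eta *m Gamma eta]mulmxA GammaK mulmx1.
Qed.

Hypothesis Gamma_adj : adjmx (Gamma eta) = Gamma eta.

Lemma inB_dag x : inB eta x -> inB eta (dag eta x).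
Proof.
elim=> [|i|i|y z _ By _ Bz|c y _ By|y z _ By _ Bz].
- by rewrite /dag adjmx1 mulmx1 GammaK; exact: inB_one.
- by rewrite /dag /ann adjmxK; exact: inB_cre.
- rewrite /dag /cre_dag !adjmxM Gamma_adj -/(ann i) !mulmxA GammaK mul1mx.
  by rewrite -mulmxA GammaK mulmx1; exact: inB_ann.
- by rewrite dagD; exact: inB_add.
- by rewrite /dag adjmxZ -scalemxAr -scalemxAl; exact: inB_scale.
- by rewrite dagM; exact: inB_mul.
Qed.

End Involution.

Definition dag_definite (eta : 'M[C]_2) :=
  forall x, inB eta x -> dag eta x *m x = 0 -> x = 0.

Lemma invol_iso_definite eta1 eta2 F :
  invol_iso eta1 eta2 F -> (forall x, inB eta1 x -> inB eta1 (dag eta1 x)) ->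
  dag_definite eta1 -> dag_definite eta2.
Proof.
move=> [_ [F_inj [F_surj [_ [FZ [FM Fdag]]]]]] B1_dag def1 y By yy0.
have [x Bx Fx] := F_surj y By.
have B0 : inB eta1 0 by rewrite -(scale0r 1%:M); apply/inB_scale/inB_one.
have F0 : F 0 = 0 by rewrite -(scale0r 1%:M) FZ ?scale0r //; exact: inB_one.
have Bxx : inB eta1 (dag eta1 x *m x) by apply: inB_mul => //; exact: B1_dag.
suff x0 : x = 0 by rewrite -Fx x0 F0.
apply: def1 => //; apply: F_inj => //.
by rewrite FM ?Fdag ?Fx ?F0 //; exact: B1_dag.
Qed.

Lemma dag1_definite : dag_definite 1%:M.
Proof.
by move=> x _; rewrite /dag Gamma1 mulmx1 mul1mx; exact: adjmx_mul_eq0.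
Qed.

Lemma inB1_dag x : inB (1%:M : 'M[C]_2) x -> inB 1%:M (dag 1%:M x).
Proof. by apply: inB_dag; rewrite Gamma1 ?mulmx1 ?adjmx1. Qed.

Lemma dagN1_ann i : dag (- 1%:M) (ann i) = - cre i.
Proof. by rewrite /dag GammaN1 /ann adjmxK parity_cre. Qed.

Lemma dagN1_cre i : dag (- 1%:M) (cre i) = - ann i.
Proof. by rewrite /dag GammaN1 parity_ann. Qed.

Lemma dagN1_not_definite : ~ dag_definite (- 1%:M).
Proof.
move=> definite; pose a := ann ord0; pose c := cre ord0; pose y := a + c *m a.
have GammaK : Gamma (- 1%:M : 'M[C]_2) *m Gamma (- 1%:M) = 1%:M.
  by rewrite GammaN1 parityK.
have By : inB (- 1%:M) y.
  have -> : y = a + (-1) *: (cre_dag (- 1%:M) ord0 *m a).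
    by rewrite /cre_dag GammaN1 parity_cre mulNmx scaleN1r opprK.
  apply/inB_add/inB_scale/inB_mul; first exact: inB_ann.
    exact: inB_cre.
  exact: inB_ann.
have y_neq0 : y != 0.
  have ay : a *m y = a by rewrite mulmxDr ann_ann add0r mulmxA ann_cre_ann.
  by apply: contraNneq (ann_neq0 ord0) => y0; rewrite -/a -ay y0 mulmx0.
(* y^dagger = -c + c a, and c^2 = a^2 = 0, c a c = c make y^dagger y vanish. *)
have yy0 : dag (- 1%:M) y *m y = 0.
  rewrite /y /a /c dagD // dagM // dagN1_ann dagN1_cre mulNmx mulmxN opprK.
  rewrite mulmxDl !mulmxDr !mulmxA !mulNmx cre_cre mul0mx oppr0 addr0 cre_ann_cre.
  by rewrite -(mulmxA (cre ord0)) ann_ann mulmx0 add0r addNr.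
by rewrite (definite y By yy0) eqxx in y_neq0.
Qed.

End FockSpace.

Theorem mainTheorem6 (R : realType) :
  ~ exists F : 'M[R[i]]_fdim -> 'M[R[i]]_fdim,
      invol_iso (1%:M : 'M[R[i]]_2) (- 1%:M) F.
Proof.
move=> [F isoF]; apply: (@dagN1_not_definite R).
exact: invol_iso_definite isoF (@inB1_dag R) (@dag1_definite R).
Qed.
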